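(* Let $M\in\mathbb{R}^{n\times n}$ be symmetric with eigenvalues ordered so that $|\lambda_1|\ge|\lambda_2|\ge\cdots$, where $\lambda=\lambda_1>0$ and $\lambda_1>|\lambda_2|$. Let $u$ be the unit leading eigenvector and $l_2=|\lambda_2|/\lambda$. Let $0<\theta\le\frac1{40}(1-l_2)^{3/2}$, and let $Q\in\mathbb{R}^{n\times n}$ satisfy $\|Q-M\|_2\le\theta\|M\|_2$. Let $\nu\le1/20$, and let $x,x'\in\mathbb{R}^n$ satisfy: - $\|x\|=\|x'\|=1$; - $\langle u,x\rangle\ge0$ and $\langle u,x'\rangle\ge0$; - $\|\mathcal P_{u_\perp}(x)\|\le\nu$ and $\|\mathcal P_{u_\perp}(x')\|\le\nu$. Put $z=\mathcal P_{u_\perp}(x)$ and $z'=\mathcal P_{u_\perp}(x')$. Then $$\Big\|\mathcal P_{u_\perp}\Big(\frac{Qx}{\|Qx\|}-\frac{Qx'}{\|Qx'\|}\Big)\Big\|\le\big(l_2(1+3\nu^2)+3\theta\big)\|z-z'\|$$ and $$\Big\|\mathcal P_{u}\Big(\frac{Qx}{\|Qx\|}-\frac{Qx'}{\|Qx'\|}\Big)\Big\|\le(4\nu+4\theta)\|z-z'\|.$$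
   Context: $\mathcal P_u$ denotes the orthogonal projector onto the span of $u$, and $\mathcal P_{u_\perp}$ the orthogonal projector onto its orthogonal complement. $\|\cdot\|_2$ is the operator norm. *)

From mathcomp Require Import all_boot all_order all_algebra.
From mathcomp Require Import classical_sets reals exp.
Set Implicit Arguments. Unset Strict Implicit. Unset Printing Implicit Defensive.
Import Order.TTheory GRing.Theory Num.Theory.
Local Open Scope ring_scope.
Local Open Scope classical_set_scope.

Section Defs.
Variable R : realType.

Definition dotv n (x y : 'cV[R]_n) : R := (x^T *m y) ord0 ord0.
Definition vnorm n (x : 'cV[R]_n) : R := Num.sqrt (dotv x x).

(* orthogonal projector onto span(u) and onto its orthogonal complement
   (u is assumed to be a unit vector wherever these are used) *)
Definition proj_u n (u x : 'cV[R]_n) : 'cV[R]_n := dotv u x *: u.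
Definition proj_uperp n (u x : 'cV[R]_n) : 'cV[R]_n := x - proj_u u x.

Definition opnorm n (A : 'M[R]_n) : R :=
  sup [set vnorm (A *m v) | v in [set v : 'cV[R]_n | vnorm v = 1]].

Definition sorted_eigendecomp n (M P : 'M[R]_n) (d : 'rV[R]_n) : Prop :=
  P^T *m P = 1%:M /\ M = P *m diag_mx d *m P^T /\
  (forall i j : 'I_n, (i <= j)%N -> `|d ord0 j| <= `|d ord0 i|).
End Defs.

From mathcomp Require Import all_boot all_order all_algebra.
From mathcomp Require Import classical_sets reals exp.
From mathcomp Require Import ring lra.
Import Order.TTheory GRing.Theory Num.Theory.
Local Open Scope ring_scope.
Set Implicit Arguments. Unset Strict Implicit. Unset Printing Implicit Defensive.

(* Write [Q = M + E], so that [|E v| <= th La |v|] with [La] the top eigenvalue,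
   and put [y = Q x], [r = |y|] (similarly for [x']); then
   [Qx/|Qx| - Qx'/|Qx'| = (y - y')/r + (1/r - 1/r') y'].
   [M] commutes with the projection onto [u_perp] and has norm [l2 La] there, so
   the [u_perp]-part of [y - y'] is at most [l2 La |z - z'|] up to [E]-terms,
   while its [u]-part is [La (<u,x> - <u,x'>)], which is [O(nu) |z - z'|] since
   [<u,x>^2 = 1 - |z|^2].  For the gap [r - r'] expand
   [r^2 - r'^2 = <y - y', y + y'>]: as [|x| = |x'|], its [M]-part is minus the
   Gram defect [La^2 <v,w> - <Mv,Mw>] at [(x - x', x + x')]; this positive
   semidefinite form ignores [u]-components, so Cauchy-Schwarz bounds it by
   [La^2 |z - z'| |z + z'| <= 2 nu La^2 |z - z'|].  Finally
   [r, r' >= La (1 - nu^2 - th)], and the constants follow from [nu <= 1/20] and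
   [th <= 1/40], the only consequence of the hypothesis on [theta] that is used. *)

Section EuclideanSpace.
Variables (R : realType) (k : nat).
Implicit Types (x y z : 'cV[R]_k) (A : 'M[R]_k).

Lemma dotvE x y : dotv x y = \sum_i x i ord0 * y i ord0.
Proof. by rewrite /dotv mxE; apply: eq_bigr => i _; rewrite mxE. Qed.

Lemma dotvC x y : dotv x y = dotv y x.
Proof. by rewrite !dotvE; apply: eq_bigr => i _; rewrite mulrC. Qed.

Lemma dotvDr x y z : dotv x (y + z) = dotv x y + dotv x z.
Proof. by rewrite /dotv mulmxDr mxE. Qed.

Lemma dotvDl x y z : dotv (y + z) x = dotv y x + dotv z x.
Proof. by rewrite dotvC dotvDr !(dotvC x). Qed.

Lemma dotvZr a x y : dotv x (a *: y) = a * dotv x y.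
Proof. by rewrite /dotv -scalemxAr mxE. Qed.

Lemma dotvZl a x y : dotv (a *: y) x = a * dotv y x.
Proof. by rewrite dotvC dotvZr dotvC. Qed.

Lemma dotvNr x y : dotv x (- y) = - dotv x y.
Proof. by rewrite -scaleN1r dotvZr mulN1r. Qed.

Lemma dotvBr x y z : dotv x (y - z) = dotv x y - dotv x z.
Proof. by rewrite dotvDr dotvNr. Qed.

Lemma dotvBl x y z : dotv (y - z) x = dotv y x - dotv z x.
Proof. by rewrite dotvC dotvBr !(dotvC x). Qed.

Lemma dotvv_ge0 x : 0 <= dotv x x.
Proof. by rewrite dotvE; apply: sumr_ge0 => i _; rewrite -expr2 sqr_ge0. Qed.

Lemma dotv_mulmxl A x y : dotv (A *m x) y = dotv x (A^T *m y).
Proof. by rewrite /dotv trmx_mul mulmxA. Qed.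

Lemma dotv_quad x y t :
  dotv (x + t *: y) (x + t *: y) = dotv x x + 2 * t * dotv x y + t ^+ 2 * dotv y y.
Proof. by rewrite !dotvDl !dotvDr !dotvZl !dotvZr (dotvC y x); ring. Qed.

Lemma dotv_diff_sum x y : dotv (x - y) (x + y) = dotv x x - dotv y y.
Proof. by rewrite dotvBl !dotvDr (dotvC y x); ring. Qed.

Lemma vnorm_ge0 x : 0 <= vnorm x.
Proof. exact: sqrtr_ge0. Qed.

Lemma vnorm_sqr x : vnorm x ^+ 2 = dotv x x.
Proof. by rewrite /vnorm sqr_sqrtr // dotvv_ge0. Qed.

Lemma vnorm_le c x : 0 <= c -> dotv x x <= c ^+ 2 -> vnorm x <= c.
Proof. by move=> c0; rewrite -vnorm_sqr ler_sqr // nnegrE vnorm_ge0. Qed.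

Lemma vnorm_eq0 x : vnorm x = 0 -> x = 0.
Proof.
move=> x0; have : dotv x x = 0 by rewrite -vnorm_sqr x0 expr0n.
have sq_ge0 i : true -> 0 <= x i ord0 * x i ord0 by rewrite -expr2 sqr_ge0.
rewrite dotvE => /(psumr_eq0P sq_ge0) sq0.
apply/matrixP => i j; rewrite (ord1 j) mxE.
by have /eqP := sq0 i isT; rewrite mulf_eq0 orbb => /eqP.
Qed.

Lemma sqr_le_of_quad_ge0 (p q s : R) :
  0 <= q -> (forall t, 0 <= p + 2 * t * s + t ^+ 2 * q) -> s ^+ 2 <= p * q.
Proof.
move=> q0 quad_ge0; have [q00|qn0] := eqVneq q 0.
  move: quad_ge0; rewrite q00 mulr0 => quad_ge0.
  have [->|sn0] := eqVneq s 0; first by rewrite expr0n.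
  have := quad_ge0 (- (p + 1) / (2 * s)); rewrite mulr0 addr0.
  have -> : 2 * (- (p + 1) / (2 * s)) * s = - (p + 1) by field; rewrite sn0.
  lra.
have qp : 0 < q by rewrite lt_def qn0 q0.
have := quad_ge0 (- s / q).
have -> : p + 2 * (- s / q) * s + (- s / q) ^+ 2 * q = p - s ^+ 2 / q by field.
by rewrite subr_ge0 ler_pdivrMr.
Qed.

Lemma normr_dotv_le x y : `|dotv x y| <= vnorm x * vnorm y.
Proof.
have quad t : 0 <= dotv x x + 2 * t * dotv x y + t ^+ 2 * dotv y y.
  by rewrite -dotv_quad dotvv_ge0.
have := sqr_le_of_quad_ge0 (dotvv_ge0 y) quad.
rewrite -!vnorm_sqr -exprMn -real_normK ?num_real // ler_sqr //.
by rewrite nnegrE mulr_ge0 ?vnorm_ge0.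
Qed.

Lemma vnormD_le x y : vnorm (x + y) <= vnorm x + vnorm y.
Proof.
apply: vnorm_le; first by rewrite addr_ge0 ?vnorm_ge0.
rewrite dotvDl !dotvDr (dotvC y x) -!vnorm_sqr.
have := normr_dotv_le x y; have := ler_norm (dotv x y).
have := vnorm_ge0 x; have := vnorm_ge0 y; nra.
Qed.

Lemma vnormZ a x : vnorm (a *: x) = `|a| * vnorm x.
Proof. by rewrite /vnorm dotvZl dotvZr mulrA -expr2 sqrtrM ?sqr_ge0 // sqrtr_sqr. Qed.

End EuclideanSpace.

Section UnitVectorProjections.
Variables (R : realType) (k : nat) (u : 'cV[R]_k).
Hypothesis u_unit : dotv u u = 1.
Implicit Types (x y : 'cV[R]_k).

Lemma dotv_proj_uperp x : dotv u (proj_uperp u x) = 0.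
Proof. by rewrite /proj_uperp /proj_u dotvBr dotvZr u_unit mulr1 subrr. Qed.

Lemma proj_decomp x : x = dotv u x *: u + proj_uperp u x.
Proof. by rewrite /proj_uperp /proj_u addrC subrK. Qed.

Lemma dotv_orth_sum a y : dotv u y = 0 ->
  dotv (a *: u + y) (a *: u + y) = a ^+ 2 + dotv y y.
Proof.
move=> uy; rewrite dotvDl !dotvDr !dotvZl !dotvZr u_unit (dotvC y u) uy; ring.
Qed.

Lemma dotv_pythagoras x :
  dotv x x = dotv u x ^+ 2 + dotv (proj_uperp u x) (proj_uperp u x).
Proof. by rewrite {1 2}(proj_decomp x) dotv_orth_sum // dotv_proj_uperp. Qed.

Lemma normr_dotv_unit_le x : `|dotv u x| <= vnorm x.
Proof. by rewrite -[X in _ <= X]mul1r -(sqrtr1 R) -u_unit normr_dotv_le. Qed.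

Lemma vnorm_proj_uperp_le x : vnorm (proj_uperp u x) <= vnorm x.
Proof.
apply: vnorm_le; first exact: vnorm_ge0.
by rewrite vnorm_sqr (dotv_pythagoras x) lerDr sqr_ge0.
Qed.

Lemma vnorm_proj_u x : vnorm (proj_u u x) = `|dotv u x|.
Proof. by rewrite /proj_u vnormZ /vnorm u_unit sqrtr1 mulr1. Qed.

Lemma proj_uperpD x y : proj_uperp u (x + y) = proj_uperp u x + proj_uperp u y.
Proof. by rewrite /proj_uperp /proj_u dotvDr scalerDl opprD addrACA. Qed.

Lemma proj_uperpZ a x : proj_uperp u (a *: x) = a *: proj_uperp u x.
Proof. by rewrite /proj_uperp /proj_u dotvZr scalerBr scalerA. Qed.

Lemma proj_uperpB x y : proj_uperp u (x - y) = proj_uperp u x - proj_uperp u y.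
Proof. by rewrite proj_uperpD -scaleN1r proj_uperpZ scaleN1r. Qed.

Lemma proj_uperp_id x : dotv u x = 0 -> proj_uperp u x = x.
Proof. by move=> ux; rewrite /proj_uperp /proj_u ux scale0r subr0. Qed.

Lemma proj_uperp_u a : proj_uperp u (a *: u) = 0.
Proof. by rewrite proj_uperpZ /proj_uperp /proj_u u_unit scale1r subrr scaler0. Qed.

End UnitVectorProjections.

Section OperatorNorm.
Variables (R : realType) (k : nat) (w0 : 'cV[R]_k).
Hypothesis w0_unit : vnorm w0 = 1.
Implicit Types (A : 'M[R]_k) (v w : 'cV[R]_k).

Lemma abs_coord_le1 w i : vnorm w = 1 -> `|w i ord0| <= 1.
Proof.
move=> w1; rewrite -(ler_sqr (normr_ge0 _)) ?nnegrE // real_normK ?num_real //.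
have : dotv w w = 1 by rewrite -vnorm_sqr w1 expr1n.
rewrite dotvE (bigD1 i) //= -expr2 expr1n => <-; rewrite lerDl.
by apply: sumr_ge0 => j _; rewrite -expr2 sqr_ge0.
Qed.

Lemma vnorm_mulmx_le_entries A w : vnorm w = 1 ->
  vnorm (A *m w) <= Num.sqrt (\sum_i (\sum_j `|A i j|) ^+ 2).
Proof.
move=> w1; apply: vnorm_le; first exact: sqrtr_ge0.
rewrite sqr_sqrtr; last by apply: sumr_ge0 => i _; exact: sqr_ge0.
rewrite dotvE; apply: ler_sum => i _; rewrite mxE -expr2 -real_normK ?num_real //.
rewrite ler_sqr ?nnegrE ?sumr_ge0 // ; apply: (le_trans (ler_norm_sum _ _ _)).
apply: ler_sum => j _; rewrite normrM -[leRHS]mulr1 ler_wpM2l //.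
exact: abs_coord_le1.
Qed.

Let unit_images A := [set vnorm (A *m v) | v in [set v : 'cV[R]_k | vnorm v = 1]]%classic.

Lemma unit_images_has_sup A : has_sup (unit_images A).
Proof.
split; first by exists (vnorm (A *m w0)); exists w0.
by exists (Num.sqrt (\sum_i (\sum_j `|A i j|) ^+ 2)) => _ [v v1 <-]; exact: vnorm_mulmx_le_entries.
Qed.

Lemma opnorm_le A c : (forall v, vnorm v = 1 -> vnorm (A *m v) <= c) -> opnorm A <= c.
Proof.
move=> ub; apply: ge_sup; first by exists (vnorm (A *m w0)); exists w0.
by move=> _ [v v1 <-]; exact: ub.
Qed.

Lemma vnorm_mulmx_le A v : vnorm (A *m v) <= opnorm A * vnorm v.
Proof.
have [v0|vn0] := eqVneq (vnorm v) 0.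
  by rewrite (vnorm_eq0 v0) mulmx0 /vnorm /dotv mulmx0 mxE sqrtr0 mulr0.
have vp : 0 < vnorm v by rewrite lt_def vn0 vnorm_ge0.
have v1 : vnorm ((vnorm v)^-1 *: v) = 1.
  by rewrite vnormZ ger0_norm ?invr_ge0 ?vnorm_ge0 // mulVf.
have : vnorm (A *m ((vnorm v)^-1 *: v)) <= opnorm A.
  by apply: (sup_upper_bound (unit_images_has_sup A)); exists ((vnorm v)^-1 *: v).
by rewrite -scalemxAr vnormZ ger0_norm ?invr_ge0 ?vnorm_ge0 // mulrC ler_pdivrMr.
Qed.

End OperatorNorm.

Section GramDefect.
Variables (R : realType) (k : nat) (M : 'M[R]_k) (La : R).
Hypothesis M_le : forall v, vnorm (M *m v) <= La * vnorm v.
Implicit Types (v w : 'cV[R]_k).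

Definition gram_defect v w := La ^+ 2 * dotv v w - dotv (M *m v) (M *m w).

Lemma gram_defect_quad v w t :
  gram_defect (v + t *: w) (v + t *: w)
  = gram_defect v v + 2 * t * gram_defect v w + t ^+ 2 * gram_defect w w.
Proof.
rewrite /gram_defect mulmxDr -scalemxAr !dotvDl !dotvDr !dotvZl !dotvZr.
by rewrite (dotvC w v) (dotvC (M *m w) (M *m v)); ring.
Qed.

Lemma gram_defect_ge0 v : 0 <= gram_defect v v.
Proof.
rewrite subr_ge0 -!vnorm_sqr -exprMn ler_sqr ?nnegrE ?vnorm_ge0 //.
exact: le_trans (vnorm_ge0 _) (M_le v).
Qed.

Lemma normr_gram_defect_le v w : `|gram_defect v w| <= La ^+ 2 * (vnorm v * vnorm w).
Proof.
have quad t : 0 <= gram_defect v v + 2 * t * gram_defect v w + t ^+ 2 * gram_defect w w.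
  by rewrite -gram_defect_quad gram_defect_ge0.
have defect_le x : gram_defect x x <= La ^+ 2 * vnorm x ^+ 2.
  by rewrite /gram_defect vnorm_sqr lerBlDr lerDl dotvv_ge0.
have bound_ge0 : 0 <= La ^+ 2 * (vnorm v * vnorm w).
  by rewrite mulr_ge0 ?sqr_ge0 ?mulr_ge0 ?vnorm_ge0.
rewrite -ler_sqr ?nnegrE // real_normK ?num_real //.
apply: le_trans (sqr_le_of_quad_ge0 (gram_defect_ge0 w) quad) _.
rewrite [leRHS](_ : _ = (La ^+ 2 * vnorm v ^+ 2) * (La ^+ 2 * vnorm w ^+ 2)); last by ring.
by rewrite ler_pM ?gram_defect_ge0.
Qed.

End GramDefect.

Section LeadingEigenvector.
Variables (R : realType) (n : nat).
Variables (M P : 'M[R]_n.+2) (d : 'rV[R]_n.+2) (u : 'cV[R]_n.+2).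
Hypothesis eig : sorted_eigendecomp M P d.
Hypothesis d0_gt_d1 : `|d ord0 (lift ord0 ord0)| < d ord0 ord0.
Hypothesis u_unit : dotv u u = 1.
Hypothesis Mu : M *m u = d ord0 ord0 *: u.
Implicit Types (v z c : 'cV[R]_n.+2).

Let PtP : P^T *m P = 1%:M. Proof. by case: eig. Qed.
Let PPt : P *m P^T = 1%:M. Proof. exact: mulmx1C PtP. Qed.

Let abs_d_sorted (i j : 'I_n.+2) : (i <= j)%N -> `|d ord0 j| <= `|d ord0 i|.
Proof. by case: eig => _ [_ /(_ i j)]. Qed.

Let mulmx_diagE v : M *m v = P *m (diag_mx d *m (P^T *m v)).
Proof. by case: eig => _ [-> _]; rewrite !mulmxA. Qed.

Let dotv_P c : dotv (P *m c) (P *m c) = dotv c c.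
Proof. by rewrite dotv_mulmxl mulmxA PtP mul1mx. Qed.

Let dotv_Pt v : dotv (P^T *m v) (P^T *m v) = dotv v v.
Proof. by rewrite dotv_mulmxl trmxK mulmxA PPt mul1mx. Qed.

Let dotv_sqrE c : dotv c c = \sum_i c i ord0 ^+ 2.
Proof. by rewrite dotvE; apply: eq_bigr => i _; rewrite expr2. Qed.

Let dotv_diag c :
  dotv (diag_mx d *m c) (diag_mx d *m c) = \sum_i d ord0 i ^+ 2 * c i ord0 ^+ 2.
Proof. by rewrite dotvE; apply: eq_bigr => i _; rewrite mul_diag_mx mxE; ring. Qed.

(* [P^T v] are the coordinates of [v] in the eigenbasis, which [M] scales by [d]. *)
Let mulmx_dotv_le (a : R) v : (forall i, (P^T *m v) i ord0 != 0 -> `|d ord0 i| <= a) ->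
  dotv (M *m v) (M *m v) <= a ^+ 2 * dotv v v.
Proof.
move=> d_le; rewrite mulmx_diagE dotv_P dotv_diag -dotv_Pt dotv_sqrE mulr_sumr.
apply: ler_sum => i _; have [->|ci] := eqVneq ((P^T *m v) i ord0) 0.
  by rewrite expr0n !mulr0.
rewrite ler_wpM2r ?sqr_ge0 // -real_normK ?num_real //.
by rewrite ler_sqr ?nnegrE ?d_le // (le_trans _ (d_le i ci)).
Qed.

Lemma vnorm_mulmx_le_eig0 v : vnorm (M *m v) <= d ord0 ord0 * vnorm v.
Proof.
have d0 : 0 < d ord0 ord0 := le_lt_trans (normr_ge0 _) d0_gt_d1.
apply: vnorm_le; first by rewrite mulr_ge0 ?vnorm_ge0 ?ltW.
rewrite exprMn vnorm_sqr mulmx_dotv_le // => i _.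
by rewrite -(gtr0_norm d0) abs_d_sorted.
Qed.

Let cu := P^T *m u.

Let cu_eq0 i : i != ord0 -> cu i ord0 = 0.
Proof.
move=> i0; have : diag_mx d *m cu = d ord0 ord0 *: cu.
  by rewrite /cu scalemxAr -Mu mulmx_diagE !mulmxA PtP mul1mx.
move=> /(congr1 (fun c : 'cV[R]_n.+2 => c i ord0)); rewrite mul_diag_mx mxE [in RHS]mxE => e.
have di_ne_d0 : d ord0 i != d ord0 ord0.
  apply: contraTneq d0_gt_d1 => <-; rewrite -leNgt (le_trans (ler_norm _)) //.
  by apply: abs_d_sorted; rewrite /= /bump /= lt0n.
have : (d ord0 i - d ord0 ord0) * cu i ord0 = 0 by rewrite mulrBl e subrr.
by move/eqP; rewrite mulf_eq0 subr_eq0 (negbTE di_ne_d0) => /eqP.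
Qed.

Let dotv_cu c : dotv cu c = cu ord0 ord0 * c ord0 ord0.
Proof. by rewrite dotvE (bigD1 ord0) //= big1 ?addr0 // => i /cu_eq0 ->; rewrite mul0r. Qed.

Lemma vnorm_mulmx_perp_le z : dotv u z = 0 ->
  vnorm (M *m z) <= `|d ord0 (lift ord0 ord0)| * vnorm z.
Proof.
move=> uz; apply: vnorm_le; first by rewrite mulr_ge0 ?vnorm_ge0.
have c0 : (P^T *m z) ord0 ord0 = 0.
  have : dotv cu cu = 1 by rewrite dotv_Pt.
  have : dotv cu (P^T *m z) = 0 by rewrite -dotv_mulmxl /cu mulmxA PPt mul1mx.
  rewrite !dotv_cu => /eqP; rewrite mulf_eq0 => /orP[/eqP-> | /eqP //].
  by rewrite mul0r => /eqP; rewrite eq_sym oner_eq0.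
rewrite exprMn vnorm_sqr; apply: mulmx_dotv_le => i ci; apply: abs_d_sorted.
have [i0|i0] := eqVneq i ord0; first by rewrite i0 c0 eqxx in ci.
by rewrite /= /bump /= lt0n.
Qed.

End LeadingEigenvector.

Section ScalarEstimates.
Variable R : realFieldType.

Lemma ler_pdiv_scaled (La m c p r : R) :
  0 < La -> 0 < m -> 0 <= c -> p <= La * c -> La * m <= r -> p / r <= c / m.
Proof.
move=> La0 m0 c0 p_le r_ge; have r0 : 0 < r := lt_le_trans (mulr_gt0 La0 m0) r_ge.
by rewrite ler_pdivrMr // mulrAC ler_pdivlMr //; nra.
Qed.

Lemma norm_gap_le (La nu th D X r r' K : R) :
  0 < La -> 0 <= nu -> nu <= 20^-1 -> 0 < th -> th <= 40^-1 -> 0 <= D -> 0 <= X ->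
  La * (1 - nu ^+ 2 - th) <= r -> La * (1 - nu ^+ 2 - th) <= r' ->
  K * (r + r') <= 2 * nu * La ^+ 2 * D + 2 * th * La ^+ 2 * X + th * La * X * (r + r') ->
  K <= La * ((nu * D + th * X) / (1 - nu ^+ 2 - th) + th * X).
Proof.
move=> La0 nu0 nu1 th0 th1 D0 X0; set m := 1 - nu ^+ 2 - th => r_ge r'_ge K_le.
have m_ge : 97/100 <= m by rewrite /m; nra.
have m0 : 0 < m by lra.
set q := nu * D + th * X.
have q0 : 0 <= q by rewrite /q; nra.
rewrite mulrDr mulrA -lerBlDr ler_pdivlMr //.
have [|K_gt] := lerP K (th * La * X).
  by have := mulr_ge0 (mulr_ge0 (ltW La0) q0) (ltW m0); nra.
have : (K - th * La * X) * (2 * (La * m)) <= 2 * La * (La * q) by rewrite /q; nra.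
nra.
Qed.

(* The first bound of [perp_rate_le] after clearing the denominator [m ^+ 3],
   where [m = 1 - nu^2 - th] is the lower bound on [|Qx| / La]. *)
Lemma perp_rate_poly_le (l nu th : R) :
  0 <= l -> l <= 1 -> 0 <= nu -> nu <= 20^-1 -> 0 < th -> th <= 40^-1 ->
  (l + 101/100 * th) * (1 - nu ^+ 2 - th) ^+ 2
    + (l * nu + th) * (nu + 101/100 * th * ((1 - nu ^+ 2 - th) + 1))
  <= (l * (1 + 3 * nu ^+ 2) + 3 * th) * (1 - nu ^+ 2 - th) ^+ 3.
Proof.
move=> l0 l1 n0 n1 t0 t1.
set s := nu^+2 + th.
have s0 : 0 <= s by rewrite /s; nra.
have s1 : s <= 11/400 by rewrite /s; nra.
have -> : 1 - nu^+2 - th = 1 - s by rewrite /s; field.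
have hb : (l*(1+3*nu^+2)+3*th)*(1-s) - l - 101/100*th >= 19/10*(l*nu^+2) + 9/10*th.
  have e : (l*(1+3*nu^+2)+3*th)*(1-s) - l - 101/100*th
     = 2*(l*nu^+2) + 199/100*th - l*th - s*(3*(l*nu^+2)+3*th) by rewrite /s; field.
  rewrite e.
  have lt : l*th <= th by nra.
  have ln0 : 0 <= l*nu^+2 by nra.
  have : s*(3*(l*nu^+2)+3*th) <= 11/400*(3*(l*nu^+2)+3*th) by nra.
  lra.
have hm : 9/10 <= (1-s)^+2 by nra.
have ln0 : 0 <= l*nu^+2 by nra.
have h1 : 9/10 * (19/10*(l*nu^+2) + 9/10*th) <= (1-s)^+2 * ((l*(1+3*nu^+2)+3*th)*(1-s) - l - 101/100*th).
  apply: ler_pM; lra.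
have h2 : (l*nu+th)*(nu + 101/100*th*((1 - s)+1)) <= l*nu^+2 + 1/4*th.
  have e : (l*nu+th)*(nu + 101/100*th*((1 - s)+1)) = l*nu^+2 + (l*nu)*(101/100*th*(2-s)) + th*nu + th*(101/100*th*(2-s)) by field.
  rewrite e.
  have a1 : (l*nu)*(101/100*th*(2-s)) <= 1/20 * (101/100*th*2).
    apply: ler_pM; nra.
  have a2 : th*(101/100*th*(2-s)) <= th * (101/100*(1/40)*2).
    apply: ler_wpM2l; nra.
  have a3 : th * nu <= th * (1/20) by apply: ler_wpM2l; lra.
  lra.
have e : (l*(1+3*nu^+2)+3*th)* (1 - s)^+3 - (l+ 101/100*th)*(1 - s)^+2
    = (1-s)^+2 * ((l*(1+3*nu^+2)+3*th)*(1-s) - l - 101/100*th) by field.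
lra.
Qed.

Lemma perp_rate_le (La l nu th D X r r' P1 P2 K : R) :
  0 < La -> 0 <= l -> l <= 1 -> 0 <= nu -> nu <= 20^-1 -> 0 < th -> th <= 40^-1 ->
  0 <= D -> 0 <= X -> X <= 101/100 * D ->
  La * (1 - nu ^+ 2 - th) <= r -> La * (1 - nu ^+ 2 - th) <= r' ->
  0 <= P1 -> P1 <= l * La * D + th * La * X ->
  0 <= P2 -> P2 <= l * La * nu + th * La ->
  0 <= K -> K <= La * ((nu * D + th * X) / (1 - nu ^+ 2 - th) + th * X) ->
  P1 / r + K / (r * r') * P2 <= (l * (1 + 3 * nu ^+ 2) + 3 * th) * D.
Proof.
move=> La0 l0 l1 nu0 nu1 th0 th1 D0 X0 X_le.
have poly := perp_rate_poly_le l0 l1 nu0 nu1 th0 th1.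
move: poly; set m := 1 - nu ^+ 2 - th => poly r_ge r'_ge P10 P1_le P20 P2_le K0.
set Kb := _ / m + _ => K_le.
have m_ge : 97/100 <= m by rewrite /m; nra.
have m0 : 0 < m by lra.
have r0 : 0 < r := lt_le_trans (mulr_gt0 La0 m0) r_ge.
have r'0 : 0 < r' := lt_le_trans (mulr_gt0 La0 m0) r'_ge.
have Kb0 : 0 <= Kb by rewrite /Kb addr_ge0 ?divr_ge0 ?(ltW m0) //; nra.
have s1 : P1 / r <= (l * D + th * X) / m.
  by apply: ler_pdiv_scaled La0 m0 _ _ r_ge; [nra | lra].
have s2 : K / (r * r') * P2 <= Kb / m * ((l * nu + th) / m).
  rewrite (_ : K / (r * r') * P2 = K / r * (P2 / r')); last by rewrite invfM; ring.
  apply: ler_pM; first (by rewrite divr_ge0 // ltW); first (by rewrite divr_ge0 // ltW).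
    exact: ler_pdiv_scaled La0 m0 Kb0 K_le r_ge.
  by apply: ler_pdiv_scaled La0 m0 _ _ r'_ge; [nra | lra].
have thX : th * X <= th * (101/100 * D) by rewrite ler_pM2l.
have A0 : 0 <= l * nu + th by nra.
have m20 : 0 <= m ^+ 2 by rewrite exprn_ge0 // ltW.
have key : (l * D + th * X) * m ^+ 2 + (nu * D + th * X + th * X * m) * (l * nu + th)
           <= (l * (1 + 3 * nu ^+ 2) + 3 * th) * D * m ^+ 3.
  have := ler_wpM2r m20 thX; have := ler_wpM2r A0 thX.
  have := ler_wpM2r (mulr_ge0 (ltW m0) A0) thX; have := ler_wpM2l D0 poly.
  lra.
apply: le_trans (lerD s1 s2) _.
rewrite (_ : (l * D + th * X) / m + Kb / m * ((l * nu + th) / m)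
  = ((l * D + th * X) * m ^+ 2 + (nu * D + th * X + th * X * m) * (l * nu + th)) / m ^+ 3).
  by rewrite ler_pdivrMr ?exprn_gt0.
by rewrite /Kb; field; lra.
Qed.

Lemma u_rate_le (La nu th D X r r' U1 U2 K : R) :
  0 < La -> 0 <= nu -> nu <= 20^-1 -> 0 < th -> th <= 40^-1 ->
  0 <= D -> 0 <= X -> X <= 101/100 * D ->
  La * (1 - nu ^+ 2 - th) <= r -> La * (1 - nu ^+ 2 - th) <= r' ->
  0 <= U1 -> U1 <= La * (101/100 * nu * D) + th * La * X -> 0 <= U2 -> U2 <= r' ->
  0 <= K -> K <= La * ((nu * D + th * X) / (1 - nu ^+ 2 - th) + th * X) ->
  U1 / r + K / (r * r') * U2 <= (4 * nu + 4 * th) * D.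
Proof.
move=> La0 nu0 nu1 th0 th1 D0 X0 X_le; set m := 1 - nu ^+ 2 - th.
move=> r_ge r'_ge U10 U1_le U20 U2_le K0; set Kb := _ / m + _ => K_le.
have m_ge : 97/100 <= m by rewrite /m; nra.
have m0 : 0 < m by lra.
have r0 : 0 < r := lt_le_trans (mulr_gt0 La0 m0) r_ge.
have r'0 : 0 < r' := lt_le_trans (mulr_gt0 La0 m0) r'_ge.
have s0 : K / (r * r') * U2 <= K / r.
  rewrite (_ : K / (r * r') * U2 = K / r * (U2 / r')); last by rewrite invfM; ring.
  rewrite -[leRHS]mulr1; apply: ler_wpM2l; first by rewrite divr_ge0 // ltW.
  by rewrite ler_pdivrMr // mul1r.
have s1 : U1 / r <= (101/100 * nu * D + th * X) / m.
  by apply: ler_pdiv_scaled La0 m0 _ _ r_ge; [nra | lra].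
have s2 : K / r <= Kb / m.
  by apply: ler_pdiv_scaled La0 m0 _ K_le r_ge; rewrite /Kb addr_ge0 ?divr_ge0 ?(ltW m0) //; nra.
have im : m^-1 <= 104/100 by rewrite -(ler_pM2l m0) mulfV ?gt_eqF //; lra.
have im0 : 0 <= m^-1 by rewrite invr_ge0 ltW.
have thX : th * X <= th * (101/100 * D) by rewrite ler_pM2l.
have e1 : (101/100 * nu * D + th * X) / m <= (101/100 * nu * D + th * (101/100 * D)) * (104/100).
  by apply: ler_pM => //; nra.
have e2 : Kb / m <= ((nu * D + th * (101/100 * D)) * (104/100) + th * (101/100 * D)) * (104/100).
  apply: ler_pM => //; first by rewrite /Kb addr_ge0 ?divr_ge0 ?(ltW m0) //; nra.
  by apply: lerD => //; apply: ler_pM => //; nra.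
have := le_trans (lerD s0 (lexx _)) (lerD (le_trans s2 e2) (le_trans s1 e1)).
have : 0 <= nu * D by nra.
have : 0 <= th * D by nra.
lra.
Qed.

End ScalarEstimates.

Section Perturbation.
Variables (R : realType) (k : nat) (M E : 'M[R]_k) (u : 'cV[R]_k) (La l th nu : R).
Hypothesis u_unit : dotv u u = 1.
Hypothesis M_sym : M^T = M.
Hypothesis Mu : M *m u = La *: u.
Hypothesis La_gt0 : 0 < La.
Hypothesis M_le : forall v, vnorm (M *m v) <= La * vnorm v.
Hypothesis M_perp_le : forall z, dotv u z = 0 -> vnorm (M *m z) <= l * La * vnorm z.
Hypothesis E_le : forall v, vnorm (E *m v) <= th * La * vnorm v.
Hypotheses (l_ge0 : 0 <= l) (l_le1 : l <= 1).
Hypotheses (th_gt0 : 0 < th) (th_le : th <= 40^-1) (nu_le : nu <= 20^-1).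

Lemma dotv_u_mulmx v : dotv u (M *m v) = La * dotv u v.
Proof. by rewrite dotvC dotv_mulmxl M_sym Mu dotvZr dotvC. Qed.

Lemma proj_uperp_mulmx v : proj_uperp u (M *m v) = M *m proj_uperp u v.
Proof.
rewrite {1}(proj_decomp u v) mulmxDr -scalemxAr Mu scalerA proj_uperpD proj_uperp_u //.
by rewrite add0r proj_uperp_id // dotv_u_mulmx dotv_proj_uperp // mulr0.
Qed.

Lemma gram_defect_shift a b v w :
  gram_defect M La (a *: u + v) (b *: u + w) = gram_defect M La v w.
Proof.
rewrite /gram_defect !mulmxDr -!scalemxAr Mu !dotvDl !dotvDr !dotvZl !dotvZr.
by rewrite (dotvC (M *m v) u) !dotv_u_mulmx (dotvC v u) u_unit; ring.
Qed.

Lemma dotv_u_lower x : vnorm x = 1 -> 0 <= dotv u x -> vnorm (proj_uperp u x) <= nu ->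
  1 - nu ^+ 2 <= dotv u x.
Proof.
move=> x1 ux z_le; have := dotv_pythagoras u_unit x.
rewrite -!vnorm_sqr x1 expr1n; have := vnorm_ge0 (proj_uperp u x); move: ux z_le.
by generalize (dotv u x) (vnorm (proj_uperp u x)) => a t; nra.
Qed.

Lemma vnorm_perturbed_ge x : vnorm x = 1 -> 1 - nu ^+ 2 <= dotv u x ->
  La * (1 - nu ^+ 2 - th) <= vnorm ((M + E) *m x).
Proof.
move=> x1 ux.
have /andP[Ex _] : - (th * La) <= dotv u (E *m x) <= th * La.
  rewrite -ler_norml; have := E_le x; rewrite x1 mulr1.
  exact: le_trans (normr_dotv_unit_le u_unit _).
have Mx : La * (1 - nu ^+ 2) <= La * dotv u x by rewrite ler_pM2l.
have := normr_dotv_unit_le u_unit ((M + E) *m x).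
rewrite mulmxDl dotvDr dotv_u_mulmx.
have := ler_norm (La * dotv u x + dotv u (E *m x)).
lra.
Qed.

Lemma vnorm_proj_uperp_perturbed_le x : vnorm x = 1 -> vnorm (proj_uperp u x) <= nu ->
  vnorm (proj_uperp u ((M + E) *m x)) <= l * La * nu + th * La.
Proof.
move=> x1 z_le; rewrite mulmxDl proj_uperpD proj_uperp_mulmx.
apply: le_trans (vnormD_le _ _) _; apply: lerD.
  apply: le_trans (M_perp_le (dotv_proj_uperp u_unit x)) _.
  by rewrite ler_wpM2l // mulr_ge0 // ltW.
by have := E_le x; rewrite x1 mulr1; exact: le_trans (vnorm_proj_uperp_le u_unit _).
Qed.

Section Pair.
Variables x x' : 'cV[R]_k.
Hypotheses (x_unit : vnorm x = 1) (x'_unit : vnorm x' = 1).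
Hypotheses (ux_ge0 : 0 <= dotv u x) (ux'_ge0 : 0 <= dotv u x').
Hypotheses (zx_le : vnorm (proj_uperp u x) <= nu) (zx'_le : vnorm (proj_uperp u x') <= nu).

Let a := dotv u x.
Let a' := dotv u x'.
Let z := proj_uperp u x.
Let z' := proj_uperp u x'.
Let D := vnorm (z - z').
Let X := vnorm (x - x').
Let y := (M + E) *m x.
Let y' := (M + E) *m x'.
Let r := vnorm y.
Let r' := vnorm y'.

Let nu_ge0 : 0 <= nu. Proof. exact: le_trans (vnorm_ge0 _) zx_le. Qed.
Let nu_sqr_le : nu ^+ 2 <= 1/400.
Proof. by have := nu_ge0; have := nu_le; nra. Qed.
Let a_ge : 1 - nu ^+ 2 <= a. Proof. exact: dotv_u_lower. Qed.
Let a'_ge : 1 - nu ^+ 2 <= a'. Proof. exact: dotv_u_lower. Qed.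

Let z_orth : dotv u (z - z') = 0.
Proof. by rewrite dotvBr !dotv_proj_uperp // subrr. Qed.

Let diff_decomp : x - x' = (a - a') *: u + (z - z').
Proof. by rewrite {1}(proj_decomp u x) {1}(proj_decomp u x') scalerBl opprD addrACA. Qed.

Let sum_decomp : x + x' = (a + a') *: u + (z + z').
Proof. by rewrite {1}(proj_decomp u x) {1}(proj_decomp u x') scalerDl addrACA. Qed.

Let vnorm_zsum_le : vnorm (z + z') <= 2 * nu.
Proof. by rewrite mulr2n mulrDl mul1r; apply: le_trans (vnormD_le _ _) (lerD _ _). Qed.

Lemma abs_dotv_u_diff_le : `|a - a'| <= 101/100 * nu * D.
Proof.
have zz w : vnorm w = 1 -> dotv (proj_uperp u w) (proj_uperp u w) = 1 - dotv u w ^+ 2.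
  by move=> w1; rewrite -[1](expr1n _ 2) -w1 vnorm_sqr (dotv_pythagoras u_unit w); ring.
have sq_diff : (a - a') * (a + a') = - dotv (z - z') (z + z').
  by rewrite /a /a' /z /z' dotv_diff_sum !zz //; ring.
have prod_le : `|a - a'| * (a + a') <= D * (2 * nu).
  rewrite -[a + a']ger0_norm; last by have := a_ge; have := a'_ge; have := nu_sqr_le; lra.
  rewrite -normrM sq_diff normrN; apply: le_trans (normr_dotv_le _ _) _.
  by rewrite ler_wpM2l ?vnorm_ge0.
have := a_ge; have := a'_ge; have := nu_ge0; have := nu_sqr_le.
have := normr_ge0 (a - a'); have := vnorm_ge0 (z - z'); rewrite -/D; nra.
Qed.

Lemma vnorm_diff_le : X <= 101/100 * D.
Proof.
have D_ge0 : 0 <= D := vnorm_ge0 _.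
apply: vnorm_le; first lra.
rewrite diff_decomp dotv_orth_sum // -vnorm_sqr -/D.
rewrite -real_normK ?num_real //.
have := abs_dotv_u_diff_le; have := normr_ge0 (a - a').
have := nu_sqr_le; have := nu_ge0; nra.
Qed.

Lemma vnorm_proj_uperp_image_diff_le :
  vnorm (proj_uperp u (y - y')) <= l * La * D + th * La * X.
Proof.
rewrite /y /y' -mulmxBr mulmxDl proj_uperpD proj_uperp_mulmx.
have -> : proj_uperp u (x - x') = z - z' by rewrite proj_uperpB.
apply: le_trans (vnormD_le _ _) _; apply: lerD; first exact: M_perp_le.
exact: le_trans (vnorm_proj_uperp_le u_unit _) (E_le _).
Qed.

Lemma abs_dotv_u_image_diff_le :
  `|dotv u (y - y')| <= La * (101/100 * nu * D) + th * La * X.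
Proof.
rewrite /y /y' -mulmxBr mulmxDl dotvDr dotv_u_mulmx dotvBr.
apply: le_trans (ler_normD _ _) _; apply: lerD.
  by rewrite normrM gtr0_norm //; apply: ler_wpM2l; [exact: ltW | exact: abs_dotv_u_diff_le].
exact: le_trans (normr_dotv_unit_le u_unit _) (E_le _).
Qed.

Let norm_gap_identity :
  (r - r') * (r + r') = - gram_defect M La (x - x') (x + x')
    + dotv (M *m (x - x')) (E *m (x + x')) + dotv (E *m (x - x')) (y + y').
Proof.
have xx : dotv (x - x') (x + x') = 0.
  by rewrite dotv_diff_sum -!vnorm_sqr x_unit x'_unit subrr.
have -> : (r - r') * (r + r') = dotv (y - y') (y + y').
  by rewrite dotv_diff_sum -!vnorm_sqr /r /r'; ring.
rewrite (_ : y - y' = M *m (x - x') + E *m (x - x')); last by rewrite -mulmxDl mulmxBr.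
rewrite dotvDl {1}(_ : y + y' = M *m (x + x') + E *m (x + x')); last by rewrite -mulmxDl mulmxDr.
by rewrite dotvDr /gram_defect xx mulr0; ring.
Qed.

Lemma norm_gap_image_le :
  `|r - r'| * (r + r')
  <= 2 * nu * La ^+ 2 * D + 2 * th * La ^+ 2 * X + th * La * X * (r + r').
Proof.
have rr_ge0 : 0 <= r + r' by rewrite addr_ge0 ?vnorm_ge0.
have defect_le : `|gram_defect M La (x - x') (x + x')| <= La ^+ 2 * (D * (2 * nu)).
  rewrite diff_decomp sum_decomp gram_defect_shift.
  apply: le_trans (normr_gram_defect_le M_le _ _) _.
  by rewrite ler_wpM2l ?sqr_ge0 // ler_wpM2l ?vnorm_ge0.
have vnorm_xsum_le : vnorm (x + x') <= 2.
  by apply: le_trans (vnormD_le _ _) _; rewrite x_unit x'_unit.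
have ME_le : `|dotv (M *m (x - x')) (E *m (x + x'))| <= La * X * (th * La * 2).
  apply: le_trans (normr_dotv_le _ _) (ler_pM (vnorm_ge0 _) (vnorm_ge0 _) (M_le _) _).
  by apply: le_trans (E_le _) _; rewrite ler_wpM2l // mulr_ge0 // ltW.
have Ey_le : `|dotv (E *m (x - x')) (y + y')| <= th * La * X * (r + r').
  exact: le_trans (normr_dotv_le _ _) (ler_pM (vnorm_ge0 _) (vnorm_ge0 _) (E_le _) (vnormD_le _ _)).
have -> : `|r - r'| * (r + r') = `|(r - r') * (r + r')| by rewrite normrM (ger0_norm rr_ge0).
rewrite norm_gap_identity.
apply: le_trans (ler_normD _ _) _; have := ler_normD (- gram_defect M La (x - x') (x + x'))
  (dotv (M *m (x - x')) (E *m (x + x'))).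
rewrite normrN; nra.
Qed.

Lemma normalized_diff_bounds :
  let w := r^-1 *: y - r'^-1 *: y' in
  vnorm (proj_uperp u w) <= (l * (1 + 3 * nu ^+ 2) + 3 * th) * D /\
  vnorm (proj_u u w) <= (4 * nu + 4 * th) * D.
Proof.
have r_ge := vnorm_perturbed_ge x_unit a_ge.
have r'_ge := vnorm_perturbed_ge x'_unit a'_ge.
have m_gt0 : 0 < La * (1 - nu ^+ 2 - th).
  by rewrite mulr_gt0 //; have := nu_sqr_le; have := th_le; lra.
have r_gt0 : 0 < r := lt_le_trans m_gt0 r_ge.
have r'_gt0 : 0 < r' := lt_le_trans m_gt0 r'_ge.
have inv_gap : `|r^-1 - r'^-1| = `|r - r'| / (r * r').
  rewrite [r^-1 - _](_ : _ = (r' - r) / (r * r')); last by field; rewrite !gt_eqF.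
  by rewrite normrM distrC [`|_^-1|]gtr0_norm // invr_gt0 mulr_gt0.
have gap := norm_gap_le La_gt0 nu_ge0 nu_le th_gt0 th_le (vnorm_ge0 _) (vnorm_ge0 _)
  r_ge r'_ge norm_gap_image_le.
move=> w.
rewrite /w (_ : _ - _ = r^-1 *: (y - y') + (r^-1 - r'^-1) *: y'); last first.
  by rewrite scalerBr scalerBl addrA subrK.
split.
  rewrite proj_uperpD !proj_uperpZ; apply: le_trans (vnormD_le _ _) _.
  rewrite !vnormZ inv_gap gtr0_norm ?invr_gt0 // mulrC.
  exact: perp_rate_le La_gt0 l_ge0 l_le1 nu_ge0 nu_le th_gt0 th_le (vnorm_ge0 _)
    (vnorm_ge0 _) vnorm_diff_le r_ge r'_ge (vnorm_ge0 _) vnorm_proj_uperp_image_diff_le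
    (vnorm_ge0 _) (vnorm_proj_uperp_perturbed_le x'_unit zx'_le) (normr_ge0 _) gap.
rewrite vnorm_proj_u // dotvDr !dotvZr; apply: le_trans (ler_normD _ _) _.
rewrite !normrM inv_gap gtr0_norm ?invr_gt0 // mulrC.
exact: u_rate_le La_gt0 nu_ge0 nu_le th_gt0 th_le (vnorm_ge0 _) (vnorm_ge0 _)
  vnorm_diff_le r_ge r'_ge (normr_ge0 _) abs_dotv_u_image_diff_le (normr_ge0 _)
  (normr_dotv_unit_le u_unit _) (normr_ge0 _) gap.
Qed.

End Pair.
End Perturbation.

Theorem lemma6p1 (R : realType) (n : nat) (M Q P : 'M[R]_n.+2) (d : 'rV[R]_n.+2)
  (u : 'cV[R]_n.+2) (theta nu : R) (x x' : 'cV[R]_n.+2) :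
  M^T = M ->
  sorted_eigendecomp M P d ->
  0 < d ord0 ord0 ->
  `|d ord0 (lift ord0 ord0)| < d ord0 ord0 ->
  vnorm u = 1 -> M *m u = d ord0 ord0 *: u ->
  let lambda := d ord0 ord0 in
  let l2 := `|d ord0 (lift ord0 ord0)| / lambda in
  0 < theta -> theta <= 40^-1 * powR (1 - l2) (3 / 2) ->
  opnorm (Q - M) <= theta * opnorm M ->
  nu <= 20^-1 ->
  vnorm x = 1 -> vnorm x' = 1 ->
  0 <= dotv u x -> 0 <= dotv u x' ->
  vnorm (proj_uperp u x) <= nu -> vnorm (proj_uperp u x') <= nu ->
  let z := proj_uperp u x in
  let z' := proj_uperp u x' in
  let w := (vnorm (Q *m x))^-1 *: (Q *m x) - (vnorm (Q *m x'))^-1 *: (Q *m x') in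
  vnorm (proj_uperp u w) <= (l2 * (1 + 3 * nu ^+ 2) + 3 * theta) * vnorm (z - z') /\
  vnorm (proj_u u w) <= (4 * nu + 4 * theta) * vnorm (z - z').
Proof.
move=> M_sym eig d0_gt0 d0_gt_d1 u1 Mu lambda l2 th_gt0 th_le QM_le nu_le
  x1 x'1 ux ux' zx zx'.
have u_unit : dotv u u = 1 by rewrite -vnorm_sqr u1 expr1n.
have l2_ge0 : 0 <= l2 by rewrite divr_ge0 // ltW.
have l2_lt1 : l2 < 1 by rewrite ltr_pdivrMr // mul1r.
have th_le' : theta <= 40^-1.
  have : powR (1 - l2) (3 / 2) <= 1 - l2 by apply: ge1r_powR; [apply/andP; split |]; lra.
  have := powR_ge0 (1 - l2) (3 / 2); lra.
have M_le v : vnorm (M *m v) <= lambda * vnorm v := vnorm_mulmx_le_eig0 eig d0_gt_d1 v.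
have M_perp_le z : dotv u z = 0 -> vnorm (M *m z) <= l2 * lambda * vnorm z.
  by rewrite /l2 divfK ?gt_eqF //; exact: (vnorm_mulmx_perp_le eig).
have E_le v : vnorm ((Q - M) *m v) <= theta * lambda * vnorm v.
  apply: le_trans (vnorm_mulmx_le u1 (Q - M) v) _; rewrite ler_wpM2r ?vnorm_ge0 //.
  apply: le_trans QM_le _; apply: ler_wpM2l; first exact: ltW.
  by apply: (opnorm_le u1) => v1 v1_unit; have := M_le v1; rewrite v1_unit mulr1.
have := normalized_diff_bounds u_unit M_sym Mu d0_gt0 M_le M_perp_le E_le l2_ge0
  (ltW l2_lt1) th_gt0 th_le' nu_le x1 x'1 ux ux' zx zx'.
by rewrite (addrC M) subrK.
Qed.
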